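(* Let $\mathbb C$ be an essentially algebraic category. Define $\mathcal C$ by $\mathrm{Ob}\,\mathcal C=\mathbb C_0$, $\mathrm{Hom}(a,b)$ the setoid of pairs $(f,r)$ with $f\in\mathbb C_1$ and $r$ a proof of $\mathsf{dom}(f)=a\wedge\mathsf{cod}(f)=b$, where $(f,r)\sim(f',r')$ iff $f=_{\mathbb C_1}f'$; transports $\mathrm{Hom}(p,q)(f,r)=(f,r')$; $\mathrm{id}_a=(\mathsf{id}(a),r)$; and $(g,r)\circ(f,s)=(\mathsf{cmp}(u),r')$ where $u\in\mathbb C_2$ is the unique element with $\mathsf{snd}(u)=g$, $\mathsf{fst}(u)=f$. Then $\mathcal C$ is an HF-category. Conversely, let $\mathcal C$ be an HF-category and define $\mathbb C_0=\mathrm{Ob}\,\mathcal C$; $\mathbb C_1$ the setoid of triples $(a,b,f)$ with $f\in\mathrm{Hom}(a,b)$, where $(a,b,f)\sim(a',b',f')$ iff $\exists p:a=a',\exists q:b=b'$ with $\mathrm{Hom}(p,q)(f)=f'$; $\mathsf{dom}(a,b,f)=a$, $\mathsf{cod}(a,b,f)=b$, $\mathsf{id}(a)=(a,a,\mathrm{id}_a)$; $\mathbb C_2$ the setoid of triples $(\mathbf f,\mathbf g,p)$ with $p:\mathsf{cod}(\mathbf f)=\mathsf{dom}(\mathbf g)$, equality being componentwise equality of $\mathbf f,\mathbf g$; $\mathsf{fst}(\mathbf f,\mathbf g,p)=\mathbf f$, $\mathsf{snd}(\mathbf f,\mathbf g,p)=\mathbf g$; and $\mathsf{cmp}((a,b,f),(c,d,g),p)=(a,d,g\circ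 T(p)\circ f)$ with $T(p)=\mathrm{Hom}(r(b),p)(\mathrm{id}_b)\in\mathrm{Hom}(b,c)$. Then $\mathbb C$ is an essentially algebraic category (satisfies A1–A9).
   Context: Setoids are types with equivalence relations; extensional functions respect them. An essentially algebraic category $\mathbb C$ consists of setoids $\mathbb C_0,\mathbb C_1,\mathbb C_2$ (objects, arrows, composable pairs) and extensional functions $\mathsf{id}:\mathbb C_0\to\mathbb C_1$, $\mathsf{dom},\mathsf{cod}:\mathbb C_1\to\mathbb C_0$, $\mathsf{cmp},\mathsf{fst},\mathsf{snd}:\mathbb C_2\to\mathbb C_1$ satisfying: A1 $\mathsf{dom}(\mathsf{id}(x))=x$; A2 $\mathsf{cod}(\mathsf{id}(x))=x$; A3 $\mathsf{dom}(\mathsf{cmp}(u))=\mathsf{dom}(\mathsf{fst}(u))$; A4 $\mathsf{cod}(\mathsf{cmp}(u))=\mathsf{cod}(\mathsf{snd}(u))$; A5 $\mathsf{fst}(u)=\mathsf{fst}(v)$, $\mathsf{snd}(u)=\mathsf{snd}(v)\Rightarrow u=v$; A6 $\mathsf{dom}(f)=\mathsf{cod}(g)\Rightarrow\exists u\in\mathbb C_2(\mathsf{snd}(u)=f\wedge\mathsf{fst}(u)=g)$; A7 $\mathsf{fst}(u)=\mathsf{id}(y)\Rightarrow\mathsf{cmp}(u)=\mathsf{snd}(u)$; A8 $\mathsf{snd}(u)=\mathsf{id}(x)\Rightarrow\mathsf{cmp}(u)=\mathsf{fst}(u)$; A9 if $\mathsf{fst}(w)=\mathsf{fst}(v)$,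 $\mathsf{snd}(v)=\mathsf{fst}(u)$, $\mathsf{snd}(u)=\mathsf{snd}(z)$, $\mathsf{snd}(w)=\mathsf{cmp}(u)$, $\mathsf{cmp}(v)=\mathsf{fst}(z)$ then $\mathsf{cmp}(w)=\mathsf{cmp}(z)$. A proof-irrelevant family $H$ of setoids over a setoid $X$: setoids $H(x)$ and extensional transports $H(p):H(x)\to H(y)$ for $p:x=_Xy$ with (F1) $H(\mathrm{refl}(x))=_{\rm ext}\mathrm{id}$, (F2) $H(p)=_{\rm ext}H(q)$ for all $p,q:x=_Xy$, (F3) $H(q)\circ H(p)=_{\rm ext}H(q\circ p)$. An HF-category consists of a setoid $\mathrm{Ob}$, a proof-irrelevant family $\mathrm{Hom}$ over $\mathrm{Ob}\times\mathrm{Ob}$ with transports $\mathrm{Hom}(p,q)$, identities $\mathrm{id}_a\in\mathrm{Hom}(a,a)$, and extensional compositions $\circ_{a,b,c}:\mathrm{Hom}(b,c)\times\mathrm{Hom}(a,b)\to\mathrm{Hom}(a,c)$ satisfying identity and associativity laws and the coherence conditions $\mathrm{id}_{a'}=\mathrm{Hom}(p,p)(\mathrm{id}_a)$ for $p:a=a'$ and $\mathrm{Hom}(p,r)(g\circ f)=\mathrm{Hom}(q,r)(g)\circ\mathrm{Hom}(p,q)(f)$ for $p:a=a'$, $q:b=b'$, $r:c=c'$. $r(x)$ denotes the reflexivity proof of $x=x$. *)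

Set Implicit Arguments.

Record Setoid := MkSetoid {
  car :> Type;
  eqv : car -> car -> Type;
  srefl : forall x, eqv x x;
  ssym : forall x y, eqv x y -> eqv y x;
  strans : forall x y z, eqv x y -> eqv y z -> eqv x z  (* strans p q = q o p *)
}.
Arguments eqv {s} _ _.
Arguments srefl {s} _.
Arguments ssym {s x y} _.
Arguments strans {s x y z} _ _.

Definition Ext {A B : Setoid} (f : A -> B) : Type :=
  forall x y : A, eqv x y -> eqv (f x) (f y).

Definition ext_eq {A : Type} {B : Setoid} (f g : A -> B) : Type :=
  forall a, eqv (f a) (g a).

Definition prodS (A B : Setoid) : Setoid :=
  @MkSetoid (A * B)
    (fun x y => (eqv (fst x) (fst y) * eqv (snd x) (snd y))%type)
    (fun x => (srefl (fst x), srefl (snd x)))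
    (fun x y p => (ssym (fst p), ssym (snd p)))
    (fun x y z p q => (strans (fst p) (fst q), strans (snd p) (snd q))).

Record Family (X : Setoid) := MkFamily {
  fam :> X -> Setoid;
  tr : forall x y : X, eqv x y -> fam x -> fam y
}.
Arguments tr {X} f {x y} p _ : rename.

Record PIFamily {X : Setoid} (H : Family X) : Type := {
  tr_ext : forall (x y : X) (p : eqv x y), Ext (tr H p);
  F1 : forall x : X, ext_eq (tr H (srefl x)) (fun a => a);
  F2 : forall (x y : X) (p q : eqv x y), ext_eq (tr H p) (tr H q);
  F3 : forall (x y z : X) (p : eqv x y) (q : eqv y z),
         ext_eq (fun a => tr H q (tr H p a)) (tr H (strans p q))
}.

Record EAData := MkEAData {
  C0 : Setoid; C1 : Setoid; C2 : Setoid;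
  e_id : C0 -> C1;
  e_dom : C1 -> C0;
  e_cod : C1 -> C0;
  e_cmp : C2 -> C1;
  e_fst : C2 -> C1;
  e_snd : C2 -> C1
}.

Record EALaws (C : EAData) : Type := {
  ext_id : Ext (e_id C);
  ext_dom : Ext (e_dom C);
  ext_cod : Ext (e_cod C);
  ext_cmp : Ext (e_cmp C);
  ext_fst : Ext (e_fst C);
  ext_snd : Ext (e_snd C);
  A1 : forall x, eqv (e_dom C (e_id C x)) x;
  A2 : forall x, eqv (e_cod C (e_id C x)) x;
  A3 : forall u, eqv (e_dom C (e_cmp C u)) (e_dom C (e_fst C u));
  A4 : forall u, eqv (e_cod C (e_cmp C u)) (e_cod C (e_snd C u));
  A5 : forall u v, eqv (e_fst C u) (e_fst C v) -> eqv (e_snd C u) (e_snd C v) ->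
         eqv u v;
  A6 : forall f g, eqv (e_dom C f) (e_cod C g) ->
         { u : C2 C & (eqv (e_snd C u) f * eqv (e_fst C u) g)%type };
  A7 : forall u y, eqv (e_fst C u) (e_id C y) -> eqv (e_cmp C u) (e_snd C u);
  A8 : forall u x, eqv (e_snd C u) (e_id C x) -> eqv (e_cmp C u) (e_fst C u);
  A9 : forall w v u z,
         eqv (e_fst C w) (e_fst C v) ->
         eqv (e_snd C v) (e_fst C u) ->
         eqv (e_snd C u) (e_snd C z) ->
         eqv (e_snd C w) (e_cmp C u) ->
         eqv (e_cmp C v) (e_fst C z) ->
         eqv (e_cmp C w) (e_cmp C z)
}.

Record HFData := MkHFData {
  Ob : Setoid;
  Hom : Family (prodS Ob Ob);
  hid : forall a : Ob, Hom (a, a);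
  hcomp : forall a b c : Ob, Hom (b, c) -> Hom (a, b) -> Hom (a, c)
}.
Arguments hcomp h {a b c} _ _.

Definition Htr (H : HFData) {a a' b b' : Ob H} (p : eqv a a') (q : eqv b b')
  : Hom H (a, b) -> Hom H (a', b') :=
  @tr _ (Hom H) (a, b) (a', b') (p, q).

Record HFLaws (H : HFData) : Type := {
  hom_PI : PIFamily (Hom H);
  comp_ext : forall (a b c : Ob H) (g g' : Hom H (b, c)) (f f' : Hom H (a, b)),
      eqv g g' -> eqv f f' -> eqv (hcomp H g f) (hcomp H g' f');
  id_left : forall (a b : Ob H) (f : Hom H (a, b)), eqv (hcomp H (hid H b) f) f;
  id_right : forall (a b : Ob H) (f : Hom H (a, b)), eqv (hcomp H f (hid H a)) f;
  assoc : forall (a b c d : Ob H) (h : Hom H (c, d)) (g : Hom H (b, c))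
      (f : Hom H (a, b)),
      eqv (hcomp H h (hcomp H g f)) (hcomp H (hcomp H h g) f);
  coh_id : forall (a a' : Ob H) (p : eqv a a'),
      eqv (hid H a') (Htr H p p (hid H a));
  coh_comp : forall (a a' b b' c c' : Ob H) (p : eqv a a') (q : eqv b b')
      (r : eqv c c') (g : Hom H (b, c)) (f : Hom H (a, b)),
      eqv (Htr H p r (hcomp H g f)) (hcomp H (Htr H q r g) (Htr H p q f))
}.

Section EA_to_HF.
Variables (C : EAData) (L : EALaws C).

Definition EAHom (a b : C0 C) : Setoid :=
  @MkSetoid { f : C1 C & (eqv (e_dom C f) a * eqv (e_cod C f) b)%type }
    (fun x y => eqv (projT1 x) (projT1 y))
    (fun x => srefl (projT1 x))
    (fun x y p => ssym p)
    (fun x y z p q => strans p q).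

Definition EAHomFam : Family (prodS (C0 C) (C0 C)) :=
  @MkFamily (prodS (C0 C) (C0 C)) (fun x => EAHom (fst x) (snd x))
    (fun x y pq fr =>
       existT _ (projT1 fr)
         (strans (fst (projT2 fr)) (fst pq), strans (snd (projT2 fr)) (snd pq))).

Definition EAid (a : C0 C) : EAHomFam (a, a) :=
  existT _ (e_id C a) (A1 L a, A2 L a).

Definition EAcomp (a b c : C0 C) (g : EAHomFam (b, c)) (f : EAHomFam (a, b))
  : EAHomFam (a, c) :=
  let pu := A6 L (projT1 g) (projT1 f)
              (strans (fst (projT2 g)) (ssym (snd (projT2 f)))) in
  let u := projT1 pu in
  existT _ (e_cmp C u)
    (strans (A3 L u) (strans (ext_dom L _ _ (snd (projT2 pu))) (fst (projT2 f))),
     strans (A4 L u) (strans (ext_cod L _ _ (fst (projT2 pu))) (snd (projT2 g)))).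

Definition EA_to_HF : HFData :=
  @MkHFData (C0 C) EAHomFam EAid EAcomp.

End EA_to_HF.

Section HF_to_EA.
Variables (H : HFData) (L : HFLaws H).

Definition HFArr := { a : Ob H & { b : Ob H & Hom H (a, b) } }.

Definition HFArr_eq (x y : HFArr) : Type :=
  { p : eqv (projT1 x) (projT1 y) &
  { q : eqv (projT1 (projT2 x)) (projT1 (projT2 y)) &
    eqv (Htr H p q (projT2 (projT2 x))) (projT2 (projT2 y)) } }.

Lemma HFArr_refl (x : HFArr) : HFArr_eq x x.
Proof.
  destruct x as [a [b f]].
  exists (srefl a), (srefl b). exact (F1 (hom_PI L) (a, b) f).
Defined.

Lemma HFArr_trans (x y z : HFArr) : HFArr_eq x y -> HFArr_eq y z -> HFArr_eq x z.
Proof.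
  destruct x as [a [b f]], y as [a1 [b1 f1]], z as [a2 [b2 f2]].
  intros [p [q e]] [p' [q' e']]. simpl in *.
  exists (strans p p'), (strans q q').
  refine (strans _ e').
  refine (strans (ssym (F3 (hom_PI L) (a, b) (a1, b1) (a2, b2)
                         (p, q) (p', q') f)) _).
  exact (tr_ext (hom_PI L) (a1, b1) (a2, b2) (p', q') _ _ e).
Defined.

Lemma HFArr_sym (x y : HFArr) : HFArr_eq x y -> HFArr_eq y x.
Proof.
  destruct x as [a [b f]], y as [a1 [b1 f1]].
  intros [p [q e]]. simpl in *.
  exists (ssym p), (ssym q).
  refine (strans (tr_ext (hom_PI L) (a1, b1) (a, b)
                    (ssym p, ssym q) _ _ (ssym e)) _).
  refine (strans (F3 (hom_PI L) (a, b) (a1, b1) (a, b)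
                    (p, q) (ssym p, ssym q) f) _).
  refine (strans (F2 (hom_PI L) (a, b) (a, b) _ (@srefl (prodS (Ob H) (Ob H)) (a, b)) f) _).
  exact (F1 (hom_PI L) (a, b) f).
Defined.

Definition HFC1 : Setoid :=
  @MkSetoid HFArr HFArr_eq HFArr_refl HFArr_sym HFArr_trans.

Definition HFC0 : Setoid := Ob H.

Definition HFdom (x : HFC1) : HFC0 := projT1 x.
Definition HFcod (x : HFC1) : HFC0 := projT1 (projT2 x).
Definition HFid (a : HFC0) : HFC1 := existT _ a (existT _ a (hid H a)).

Definition HFC2 : Setoid :=
  @MkSetoid { f : HFC1 & { g : HFC1 & eqv (HFcod f) (HFdom g) } }
    (fun x y => (eqv (projT1 x) (projT1 y) *
                 eqv (projT1 (projT2 x)) (projT1 (projT2 y)))%type)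
    (fun x => (srefl _, srefl _))
    (fun x y e => (ssym (fst e), ssym (snd e)))
    (fun x y z e e' => (strans (fst e) (fst e'), strans (snd e) (snd e'))).

Definition HFfst (u : HFC2) : HFC1 := projT1 u.
Definition HFsnd (u : HFC2) : HFC1 := projT1 (projT2 u).

Definition HFT {b c : Ob H} (p : eqv b c) : Hom H (b, c) :=
  Htr H (srefl b) p (hid H b).

Definition HFcmp (u : HFC2) : HFC1 :=
  match u with
  | existT _ (existT _ a (existT _ b f)) (existT _ (existT _ c (existT _ d g)) p) =>
      existT _ a (existT _ d (hcomp H g (hcomp H (HFT p) f)))
  end.

Definition HF_to_EA : EAData :=
  @MkEAData HFC0 HFC1 HFC2 HFid HFdom HFcod HFcmp HFfst HFsnd.

End HF_to_EA.


(* From EA to HF: the Hom-setoids forget the proofs about domain and codomain,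
   so transports act trivially and all family laws hold by reflexivity.  The key
   fact is [EAcomp_spec]: by uniqueness of composable pairs (A5), the composite
   of g and f is cmp u for ANY u with snd u = g and fst u = f.  Each category law
   then follows by choosing suitable pairs u with A6 and applying A7, A8 or A9.

   Composition is extensional by the
   coherence law [coh_comp]; A7/A8 reduce to the identity laws, and A9 reduces,
   after replacing the given pairs by canonical ones, to associativity. *)

Section EA_to_HF_laws.
Variables (C : EAData) (L : EALaws C).

Definition composable {a b c : C0 C} (g : EAHomFam C (b, c)) (f : EAHomFam C (a, b)) :
  eqv (e_dom C (projT1 g)) (e_cod C (projT1 f)) :=
  strans (fst (projT2 g)) (ssym (snd (projT2 f))).

(* The composite is cmp u for every pair u with components g and f (by A5). *)
Lemma EAcomp_spec {a b c : C0 C} (g : EAHomFam C (b, c)) (f : EAHomFam C (a, b))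
  (u : C2 C) :
  eqv (e_snd C u) (projT1 g) -> eqv (e_fst C u) (projT1 f) ->
  eqv (projT1 (EAcomp L g f)) (e_cmp C u).
Proof.
  intros hs hf. unfold EAcomp; simpl.
  match goal with |- context [A6 ?L ?x ?y ?z] =>
    destruct (A6 L x y z) as [u0 [s0 f0]] end; simpl.
  apply (ext_cmp L), (A5 L).
  - exact (strans f0 (ssym hf)).
  - exact (strans s0 (ssym hs)).
Qed.

(* Transports only change the proof component, so the family is trivially
   proof-irrelevant. *)
Lemma EAHom_PI : PIFamily (EAHomFam C).
Proof.
  refine (Build_PIFamily _ _ _ _ _).
  - intros x y p f g e. exact e.
  - intros x f. exact (srefl _).
  - intros x y p q f. exact (srefl _).
  - intros x y z p q f. exact (srefl _).
Qed.

Lemma EAcomp_ext (a b c : C0 C) (g g' : EAHomFam C (b, c)) (f f' : EAHomFam C (a, b)) :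
  eqv g g' -> eqv f f' -> eqv (EAcomp L g f) (EAcomp L g' f').
Proof.
  intros eg ef. simpl in *.
  destruct (A6 L (projT1 g') (projT1 f') (composable g' f')) as [u [us uf]].
  refine (strans (EAcomp_spec g f u (strans us (ssym eg)) (strans uf (ssym ef))) _).
  exact (ssym (EAcomp_spec g' f' u us uf)).
Qed.

(* Left identity is A8, right identity is A7. *)
Lemma EAcomp_id_left (a b : C0 C) (f : EAHomFam C (a, b)) :
  eqv (EAcomp L (EAid L b) f) f.
Proof.
  simpl. destruct (A6 L (e_id C b) (projT1 f) (composable (EAid L b) f)) as [u [us uf]].
  exact (strans (EAcomp_spec (EAid L b) f u us uf) (strans (A8 L u b us) uf)).
Qed.

Lemma EAcomp_id_right (a b : C0 C) (f : EAHomFam C (a, b)) :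
  eqv (EAcomp L f (EAid L a)) f.
Proof.
  simpl. destruct (A6 L (projT1 f) (e_id C a) (composable f (EAid L a))) as [u [us uf]].
  exact (strans (EAcomp_spec f (EAid L a) u us uf) (strans (A7 L u a uf) us)).
Qed.

(* Associativity is A9, applied to the four pairs (g,f), (h,g), (h, g o f)
   and (h o g, f) obtained from A6. *)
Lemma EAcomp_assoc (a b c d : C0 C) (h : EAHomFam C (c, d)) (g : EAHomFam C (b, c))
  (f : EAHomFam C (a, b)) :
  eqv (EAcomp L h (EAcomp L g f)) (EAcomp L (EAcomp L h g) f).
Proof.
  simpl.
  destruct (A6 L (projT1 g) (projT1 f) (composable g f)) as [gf [gf_s gf_f]].
  destruct (A6 L (projT1 h) (projT1 g) (composable h g)) as [hg [hg_s hg_f]].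
  pose proof (EAcomp_spec g f gf gf_s gf_f) as E_gf.
  pose proof (EAcomp_spec h g hg hg_s hg_f) as E_hg.
  assert (dz : eqv (e_dom C (projT1 h)) (e_cod C (e_cmp C gf))).
  { exact (strans (composable h g) (ssym (strans (A4 L gf) (ext_cod L _ _ gf_s)))). }
  destruct (A6 L (projT1 h) (e_cmp C gf) dz) as [z [zs zf]].
  assert (dw : eqv (e_dom C (e_cmp C hg)) (e_cod C (projT1 f))).
  { exact (strans (A3 L hg) (strans (ext_dom L _ _ hg_f) (composable g f))). }
  destruct (A6 L (e_cmp C hg) (projT1 f) dw) as [w [ws wf]].
  refine (strans (EAcomp_spec h (EAcomp L g f) z zs (strans zf (ssym E_gf))) _).
  refine (strans _ (ssym (EAcomp_spec (EAcomp L h g) f w (strans ws (ssym E_hg)) wf))).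
  apply ssym, (A9 L w gf hg z).
  - exact (strans wf (ssym gf_f)).
  - exact (strans gf_s (ssym hg_f)).
  - exact (strans hg_s (ssym zs)).
  - exact ws.
  - exact (ssym zf).
Qed.

Lemma EA_coh_id (a a' : C0 C) (p : eqv a a') :
  eqv (EAid L a') (Htr (EA_to_HF L) p p (EAid L a)).
Proof. exact (ext_id L _ _ (ssym p)). Qed.

(* Transports do not change arrows, so composition commutes with them. *)
Lemma EA_coh_comp (a a' b b' c c' : C0 C) (p : eqv a a') (q : eqv b b') (r : eqv c c')
  (g : EAHomFam C (b, c)) (f : EAHomFam C (a, b)) :
  eqv (Htr (EA_to_HF L) p r (EAcomp L g f))
      (EAcomp L (Htr (EA_to_HF L) q r g) (Htr (EA_to_HF L) p q f)).
Proof.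
  simpl. destruct (A6 L (projT1 g) (projT1 f) (composable g f)) as [u [us uf]].
  refine (strans (EAcomp_spec g f u us uf) _).
  exact (ssym (EAcomp_spec (Htr (EA_to_HF L) q r g) (Htr (EA_to_HF L) p q f) u us uf)).
Qed.

Lemma EA_to_HF_laws : HFLaws (EA_to_HF L).
Proof.
  exact (Build_HFLaws (EA_to_HF L) EAHom_PI EAcomp_ext EAcomp_id_left
           EAcomp_id_right EAcomp_assoc EA_coh_id EA_coh_comp).
Qed.

End EA_to_HF_laws.

Section HF_to_EA_laws.
Variables (H : HFData) (L : HFLaws H).

Lemma tr_irrel {a b a' b' : Ob H} (p p' : eqv a a') (q q' : eqv b b') (f : Hom H (a, b)) :
  eqv (Htr H p q f) (Htr H p' q' f).
Proof. exact (F2 (hom_PI L) (a, b) (a', b') (p, q) (p', q') f). Qed.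

Lemma tr_refl {a b : Ob H} (f : Hom H (a, b)) : eqv (Htr H (srefl a) (srefl b) f) f.
Proof. exact (F1 (hom_PI L) (a, b) f). Qed.

Lemma tr_cong {a b a' b' : Ob H} (p : eqv a a') (q : eqv b b') (f g : Hom H (a, b)) :
  eqv f g -> eqv (Htr H p q f) (Htr H p q g).
Proof. exact (tr_ext (hom_PI L) (a, b) (a', b') (p, q) f g). Qed.

Lemma tr_tr {a b a1 b1 a2 b2 : Ob H} (p1 : eqv a a1) (q1 : eqv b b1)
  (p2 : eqv a1 a2) (q2 : eqv b1 b2) (p3 : eqv a a2) (q3 : eqv b b2) (f : Hom H (a, b)) :
  eqv (Htr H p2 q2 (Htr H p1 q1 f)) (Htr H p3 q3 f).
Proof.
  refine (strans (F3 (hom_PI L) (a, b) (a1, b1) (a2, b2) (p1, q1) (p2, q2) f) _).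
  exact (tr_irrel _ _ _ _ f).
Qed.

Lemma tr_inv {a b a' b' : Ob H} (p : eqv a a') (q : eqv b b') (f : Hom H (a, b))
  (g : Hom H (a', b')) :
  eqv (Htr H p q f) g -> eqv f (Htr H (ssym p) (ssym q) g).
Proof.
  intro e. refine (strans (ssym (tr_refl f)) _).
  refine (strans (ssym (tr_tr p q (ssym p) (ssym q) _ _ f)) _).
  exact (tr_cong _ _ _ _ e).
Qed.

Lemma tr_id {a a' : Ob H} (p q : eqv a a') : eqv (Htr H p q (hid H a)) (hid H a').
Proof. exact (strans (tr_irrel p p q p _) (ssym (coh_id L a a' p))). Qed.

Lemma tr_of_identity {a b y c : Ob H} (pa : eqv a y) (pb : eqv b y) (f : Hom H (a, b))
  (e : eqv (Htr H pa pb f) (hid H y)) (q1 : eqv a c) (q2 : eqv b c) :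
  eqv (Htr H q1 q2 f) (hid H c).
Proof.
  refine (strans (tr_cong q1 q2 _ _ (tr_inv _ _ _ _ e)) _).
  refine (strans (tr_tr _ _ _ _ (strans (ssym pa) q1) (strans (ssym pb) q2) _) _).
  exact (tr_id _ _).
Qed.

Lemma tr_T {b c b' c' : Ob H} (p : eqv b c) (p' : eqv b' c') (pb : eqv b b') (pc : eqv c c') :
  eqv (Htr H pb pc (HFT H p)) (HFT H p').
Proof.
  unfold HFT.
  refine (strans (tr_tr _ _ _ _ pb (strans pb p') _) _).
  refine (strans (ssym (tr_tr pb pb (srefl b') p' _ _ _)) _).
  exact (tr_cong _ _ _ _ (ssym (coh_id L _ _ pb))).
Qed.

Lemma T_irrel {b c : Ob H} (p p' : eqv b c) : eqv (HFT H p) (HFT H p').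
Proof. exact (tr_irrel _ _ _ _ _). Qed.

Lemma tr_T_id {b c c' : Ob H} (p : eqv b c) (p1 : eqv b c') (p2 : eqv c c') :
  eqv (Htr H p1 p2 (HFT H p)) (hid H c').
Proof. exact (strans (tr_tr _ _ _ _ p1 p1 _) (tr_id _ _)). Qed.

Notation CE := (comp_ext L).

Definition arr {a b : Ob H} (f : Hom H (a, b)) : HFC1 L := existT _ a (existT _ b f).

Definition cpair (x y : HFC1 L) (p : eqv (HFcod x) (HFdom y)) : HFC2 L :=
  existT _ x (existT _ y p).

(* Composition is extensional: transport distributes over the two composites. *)
Lemma HFcmp_ext : Ext (@HFcmp H L).
Proof.
  intros [[a [b f]] [[c [d g]] p]] [[a' [b' f']] [[c' [d' g']] p']]
    [[pa [pb e1]] [pc [pd e2]]].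
  simpl in *. exists pa, pd.
  refine (strans (coh_comp L _ _ _ _ _ _ pa pc pd g _) _).
  refine (CE _ _ _ _ _ _ _ e2 _).
  refine (strans (coh_comp L _ _ _ _ _ _ pa pb pc _ f) _).
  exact (CE _ _ _ _ _ _ _ (tr_T _ _ _ _) e1).
Qed.

Lemma HFcmp_id_fst (u : HFC2 L) (y : HFC0 H) :
  eqv (HFfst u) (HFid L y) -> eqv (HFcmp u) (HFsnd u).
Proof.
  destruct u as [[a [b f]] [[c [d g]] p]]. intros [pa [pb e]]. simpl in *.
  exists (strans pa (strans (ssym pb) p)), (srefl d).
  refine (strans (coh_comp L _ _ _ _ _ _ _ (srefl c) (srefl d) g _) _).
  refine (strans (CE _ _ _ _ _ _ _ (tr_refl g)
                    (coh_comp L _ _ _ _ _ _ _ p (srefl c) _ f)) _).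
  refine (strans (CE _ _ _ _ _ _ _ (srefl g)
                    (CE _ _ _ _ _ _ _ (tr_T_id _ _ _) (tr_of_identity pa pb f e _ _))) _).
  exact (strans (CE _ _ _ _ _ _ _ (srefl g) (id_left L _ _ _)) (id_right L _ _ _)).
Qed.

Lemma HFcmp_id_snd (u : HFC2 L) (x : HFC0 H) :
  eqv (HFsnd u) (HFid L x) -> eqv (HFcmp u) (HFfst u).
Proof.
  destruct u as [[a [b f]] [[c [d g]] p]]. intros [pc [pd e]]. simpl in *.
  exists (srefl a), (strans pd (strans (ssym pc) (ssym p))).
  refine (strans (coh_comp L _ _ _ _ _ _ _ (ssym p) _ g _) _).
  refine (strans (CE _ _ _ _ _ _ _ (tr_of_identity pc pd g e _ _)
                    (coh_comp L _ _ _ _ _ _ _ (srefl b) (ssym p) _ f)) _).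
  refine (strans (CE _ _ _ _ _ _ _ (srefl _)
                    (CE _ _ _ _ _ _ _ (tr_T_id _ _ _) (tr_refl f))) _).
  exact (strans (id_left L _ _ _) (id_left L _ _ _)).
Qed.

(* Associativity of cmp on canonical triples of arrows; the connecting arrows
   on the two sides agree by proof irrelevance of transports. *)
Lemma HFcmp_assoc {a b c d e k : Ob H} (f : Hom H (a, b)) (g : Hom H (c, d))
  (h : Hom H (e, k)) (p p' : eqv b c) (q q' : eqv d e) :
  eqv (HFcmp (cpair (arr f) (HFcmp (cpair (arr g) (arr h) q)) p'))
      (HFcmp (cpair (HFcmp (cpair (arr f) (arr g) p)) (arr h) q')).
Proof.
  simpl. exists (srefl a), (srefl k).
  refine (strans (tr_refl _) _).
  refine (strans (ssym (assoc L _ _ _ _ _ _ _)) _).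
  refine (CE _ _ _ _ _ _ _ (srefl h) _).
  refine (strans (ssym (assoc L _ _ _ _ _ _ _)) _).
  refine (CE _ _ _ _ _ _ _ (T_irrel _ _) _).
  exact (CE _ _ _ _ _ _ _ (srefl g) (CE _ _ _ _ _ _ _ (T_irrel _ _) (srefl f))).
Qed.

(* A9: replace w and z by the canonical pairs (f, g o h) and (g o f, h) built
   from v = (f, g) and u = (g, h), then use associativity. *)
Lemma HFcmp_A9 (w v u z : HFC2 L) :
  eqv (HFfst w) (HFfst v) -> eqv (HFsnd v) (HFfst u) -> eqv (HFsnd u) (HFsnd z) ->
  eqv (HFsnd w) (HFcmp u) -> eqv (HFcmp v) (HFfst z) ->
  eqv (HFcmp w) (HFcmp z).
Proof.
  destruct v as [[a [b f]] [[c [d g]] pv]], u as [g' [[e [k h]] pu]].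
  intros e_wv e_vu e_uz e_wu e_vz.
  pose (q := strans (projT1 (projT2 e_vu)) pu : eqv d e).
  pose (gh := HFcmp (cpair (arr g) (arr h) q)).
  assert (E_gh : eqv gh (HFcmp (cpair g' (arr h) pu))).
  { apply HFcmp_ext. exact (e_vu, srefl _). }
  assert (E_w : eqv (HFcmp w) (HFcmp (cpair (arr f) gh pv))).
  { apply HFcmp_ext. exact (e_wv, strans e_wu (ssym E_gh)). }
  assert (E_z : eqv (HFcmp (cpair (HFcmp (cpair (arr f) (arr g) pv)) (arr h) q))
                    (HFcmp z)).
  { apply HFcmp_ext. exact (e_vz, e_uz). }
  exact (strans E_w (strans (HFcmp_assoc f g h pv pv q q) E_z)).
Qed.

Lemma HF_to_EA_laws : EALaws (HF_to_EA L).
Proof.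
  refine (Build_EALaws (HF_to_EA L) _ _ _ HFcmp_ext _ _ _ _ _ _ _ _
            HFcmp_id_fst HFcmp_id_snd HFcmp_A9).
  - intros x y p. exists p, p. exact (ssym (coh_id L _ _ p)).
  - intros x y e. exact (projT1 e).
  - intros x y e. exact (projT1 (projT2 e)).
  - intros x y e. exact (fst e).
  - intros x y e. exact (snd e).
  - intros x. exact (srefl x).
  - intros x. exact (srefl x).
  - intros [[a [b f]] [[c [d g]] p]]. exact (srefl a).
  - intros [[a [b f]] [[c [d g]] p]]. exact (srefl d).
  - intros u v e1 e2. exact (e1, e2).
  - intros f g p. exists (cpair g f (ssym p)). exact (srefl _, srefl _).
Qed.

End HF_to_EA_laws.

Theorem mainTheorem8 :
  (forall (C : EAData) (L : EALaws C), HFLaws (@EA_to_HF C L)) *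
  (forall (H : HFData) (L : HFLaws H), EALaws (@HF_to_EA H L)).
Proof.
  split.
  - exact EA_to_HF_laws.
  - exact HF_to_EA_laws.
Qed.
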